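(* Let $J$ be an interval of ${}^\bullet\mathbb{R}$. Then both $J$ and its interior $\mathrm{int}(J)$ are connected in the Fermat topology.
   Context: Fermat reals: let $\mathbb{R}_o[t]$ be the set of maps $x:\mathbb{R}_{\ge0}\to\mathbb{R}$, $t\mapsto x_t$, of the form $x_t=r+\sum_{i=1}^k\alpha_i t^{a_i}+o(t)$ as $t\to0^+$, with $k\in\mathbb{N}$, $r,\alpha_i\in\mathbb{R}$, $a_i\in\mathbb{R}_{\ge0}$. Write $x\sim y$ iff $x_t=y_t+o(t)$ as $t\to0^+$. The ring of Fermat reals is ${}^\bullet\mathbb{R}:=\mathbb{R}_o[t]/\sim$ with pointwise operations; $\mathbb{R}\subseteq{}^\bullet\mathbb{R}$ via constants. The standard part of $x=[x_t]$ is ${}^\circ x:=x_0$. ${}^\bullet\mathbb{R}$ is totally ordered by: $x\le y$ iff for representatives there is $z\in\mathbb{R}_o[t]$ with $z\sim0$ and $x_t\le y_t+z_t$ for all sufficiently small $t\ge0$. Let $\overline{{}^\bullet\mathbb{R}}:={}^\bullet\mathbb{R}\cup\{-\infty,+\infty\}$ with ${}^\circ(\pm\infty):=\pm\infty$. An interval of ${}^\bullet\mathbb{R}$ is a set $[a,b]$, $(a,b)$, $[a,b)$ or $(a,b]$ of points $x\in{}^\bullet\mathbb{R}$ satisfying the corresponding inequalities, where $a\le b$ are in $\overline{{}^\bullet\mathbb{R}}$. The Fermat topology on ${}^\bullet\mathbb{R}$ has as open sets the sets ${}^\bullet V:=\{x\in{}^\bullet\mathbb{R}:{}^\circ x\in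 V\}$ for $V\subseteq\mathbb{R}$ open; subsets carry the subspace topology, and $\mathrm{int}$ denotes interior in the Fermat topology (for an interval with endpoints $a,b$ it equals $\{x\in{}^\bullet\mathbb{R}:{}^\circ a<{}^\circ x<{}^\circ b\}$). *)

From HB Require Import structures.
From mathcomp Require Import all_boot all_order all_algebra.
From mathcomp Require Import all_classical all_reals.
From mathcomp Require Import all_analysis.
Import numFieldTopology.Exports.
Set Implicit Arguments. Unset Strict Implicit. Unset Printing Implicit Defensive.
Import Order.TTheory GRing.Theory Num.Theory.
Local Open Scope classical_set_scope.
Local Open Scope ring_scope.

Section Fermat.
Variable R : realType.

(* w_t = o(t) as t -> 0+, for t ranging in R_{>=0} (so in particular w_0 = 0). *)
Definition littleo_t (w : R -> R) : Prop :=
  forall e : R, 0 < e -> exists2 d : R, 0 < d &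
    forall t : R, 0 <= t -> t < d -> `|w t| <= e * t.

(* R_o[t]: maps x with x_t = r + sum_i alpha_i t^(a_i) + o(t), a_i >= 0.
   Only the values on t >= 0 are relevant; the pairs (alpha_i, a_i) are the
   elements of the list s. *)
Definition Rot (x : R -> R) : Prop :=
  exists (r : R) (s : seq (R * R)),
    (forall p, p \in s -> 0 <= p.2) /\
    littleo_t (fun t => x t - (r + \sum_(p <- s) p.1 * powR t p.2)).

Definition fsim (x y : R -> R) : Prop := littleo_t (fun t => x t - y t).

Definition fclass (x : R -> R) : set (R -> R) := [set y | Rot y /\ fsim x y].

Definition FR : Type := {X : set (R -> R) | exists2 x, Rot x & X = fclass x}.

HB.instance Definition _ := gen_eqMixin FR.
HB.instance Definition _ := gen_choiceMixin FR.

Definition FRrep (X : FR) : R -> R := s2val (cid2 (svalP X)).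

Definition st (X : FR) : R := FRrep X 0.

Definition FRle (X Y : FR) : Prop :=
  exists (x y z : R -> R), sval X x /\ sval Y y /\ Rot z /\ fsim z (fun=> 0) /\
    exists2 d : R, 0 < d & forall t : R, 0 <= t -> t < d -> x t <= y t + z t.

Inductive eFR := NInf | Fin of FR | PInf.

Definition eFRle (a b : eFR) : Prop :=
  match a, b with
  | NInf, _ => True
  | _, PInf => True
  | Fin x, Fin y => FRle x y
  | _, _ => False
  end.

Definition eFRlt (a b : eFR) : Prop := eFRle a b /\ a <> b.

Inductive itv_kind := CC | OO | CO | OC.

Definition FRitv (k : itv_kind) (a b : eFR) : set FR :=
  [set x | match k with
           | CC => eFRle a (Fin x) /\ eFRle (Fin x) b
           | OO => eFRlt a (Fin x) /\ eFRlt (Fin x) b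
           | CO => eFRle a (Fin x) /\ eFRlt (Fin x) b
           | OC => eFRlt a (Fin x) /\ eFRle (Fin x) b
           end].

Definition is_FRinterval (J : set FR) : Prop :=
  exists (k : itv_kind) (a b : eFR), eFRle a b /\ J = FRitv k a b.

End Fermat.

(* the Fermat topology on FR: the initial topology of the standard part map,
   i.e. open sets are exactly {x | st x \in V} with V open in R *)
Notation FRtop R := (@initial_topology (FR R) R (@st R)).

(* The standard part st : FR -> R determines the Fermat topology, so a set of
   Fermat reals is connected as soon as its image under st is connected, i.e.
   is an interval of R.  An interval J of FR, and likewise its interior, is
   convex with respect to st: any z with st x < st z < st y for some x, y in J
   lies in J, because the order of FR refines the order of standard parts.  In
   particular st(J) contains every real strictly between two of its points
   (realised by constant Fermat reals), so st(J) is an interval. *)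
From HB Require Import structures.
From mathcomp Require Import all_boot all_order all_algebra.
From mathcomp Require Import all_classical all_reals.
From mathcomp Require Import all_analysis.
From mathcomp Require Import lra.
Import numFieldTopology.Exports.
Import Order.TTheory GRing.Theory Num.Theory.
Set Implicit Arguments. Unset Strict Implicit. Unset Printing Implicit Defensive.
Local Open Scope classical_set_scope.
Local Open Scope ring_scope.

Lemma image_setI_preimage (S T : Type) (f : S -> T) (A : set S) (V : set T) :
  f @` (A `&` f @^-1` V) = f @` A `&` V.
Proof.
apply/seteqP; split=> [_ [a [Aa Va] <-]|_ [[a Aa <-] Va]]; first by split; [exists a|].
by exists a.
Qed.

(* A relatively clopen B in A is the trace of f^-1 V (V open) and of f^-1 W
   (W closed), so f(B) is relatively clopen in f(A). *)
Lemma connected_initial_image (S : choiceType) (T : topologicalType)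
    (f : S -> T) (A : set (initial_topology f)) :
  connected (f @` A) -> connected A.
Proof.
move=> fA_conn B [b Bb] [C [V oV VC] BC] [D cD BD].
have [W oW WD] := closed_openC cD.
have DE : D = f @^-1` (~` W) by rewrite -preimage_setC WD setCK.
have fBV : f @` B = f @` A `&` V by rewrite BC -VC image_setI_preimage.
have fBA : f @` B = f @` A.
  apply: fA_conn; first by exists (f b), b.
  - by exists V.
  - exists (~` W); first exact: open_closedC.
    by rewrite BD DE image_setI_preimage.
apply/seteqP; split=> [a|a Aa]; first by rewrite BC => -[].
have : (f @` B) (f a) by rewrite fBA; exists a.
by rewrite fBV BC -VC => -[_ Va].
Qed.

Lemma near_right0_exists (R : realType) (P : set R) :
  (\forall t \near 0^'+, P t) ->
  exists2 d : R, 0 < d & forall t, 0 < t -> t < d -> P t.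
Proof.
rewrite near_withinE => /nbhs_ballP [d /= d0 dP]; exists d => // t t0 td.
by apply: dP => //; rewrite /ball /= sub0r normrN gtr0_norm.
Qed.

Lemma powR_cvg_at0 (R : realType) (a : R) :
  0 <= a -> powR t a @[t --> 0^'+] --> powR 0 a.
Proof.
rewrite le_eqVlt => /orP[/eqP<-|a0].
  by under eq_cvg do rewrite powRr0; rewrite powRr0; exact: cvg_cst.
by rewrite powR0 ?gt_eqF //; exact: powR_cvg0.
Qed.

Section Fermat_reals.
Variable R : realType.
Implicit Types (w x y : R -> R) (X Y Z : FR R).

Lemma littleo_t_at0 w : littleo_t w -> w 0 = 0.
Proof.
move=> /(_ 1 ltr01) [d d0 /(_ 0 (lexx _) d0)].
by rewrite mulr0 normr_le0 => /eqP.
Qed.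

Lemma littleo_t_cvg0 w : littleo_t w -> w t @[t --> 0^'+] --> 0.
Proof.
move=> wo; apply/cvgr0Pnorm_lt => e e0.
have [d d0 wd] := wo 1 ltr01.
by near=> t; apply: (le_lt_trans (wd t _ _)); rewrite ?mul1r //; exact: ltW.
Unshelve. all: by end_near. Qed.

Lemma Rot_cvg x : Rot x -> x t @[t --> 0^'+] --> x 0.
Proof.
move=> [r [s [s_ge0 xo]]].
set p := fun t => r + \sum_(q <- s) q.1 * powR t q.2.
have p_cvg : p t @[t --> 0^'+] --> p 0.
  apply: cvgD; first exact: cvg_cst.
  rewrite big_seq (eq_cvg _ _ (fun t => big_seq _ _ _ (fun q => q.1 * powR t q.2))).
  apply: (cvg_big add_continuous) => q /s_ge0 q_ge0.
  by apply: cvgMl_tmp; exact: powR_cvg_at0.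
have /eqP : x 0 - p 0 = 0 := littleo_t_at0 xo.
rewrite subr_eq0 => /eqP ->.
rewrite (eq_cvg _ _ (fun t => esym (subrK (p t) (x t)))) -[p 0]add0r.
exact: cvgD (littleo_t_cvg0 xo) p_cvg.
Qed.

Lemma fsim_refl x : fsim x x.
Proof.
move=> e e0; exists 1 => // t t0 _.
by rewrite subrr normr0 mulr_ge0 // ltW.
Qed.

Lemma Rot_cst (r : R) : Rot (fun=> r).
Proof.
exists r, [::]; split => // e e0; exists 1 => // t t0 _.
by rewrite big_nil addr0 subrr normr0 mulr_ge0 // ltW.
Qed.

Lemma FRrep_spec X : Rot (FRrep X) /\ sval X = fclass (FRrep X).
Proof. by rewrite /FRrep; case: cid2. Qed.

Lemma FRrep_mem X : sval X (FRrep X).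
Proof. by have [Rx ->] := FRrep_spec X; split => //; exact: fsim_refl. Qed.

Lemma st_mem X x : sval X x -> st X = x 0.
Proof.
have [_ ->] := FRrep_spec X; move=> [_ /littleo_t_at0 /eqP].
by rewrite subr_eq0 => /eqP.
Qed.

Definition cstFR (r : R) : FR R :=
  exist _ (fclass (fun=> r)) (ex_intro2 _ _ _ (Rot_cst r) erefl).

Lemma st_cst (r : R) : st (cstFR r) = r.
Proof. by rewrite (@st_mem (cstFR r) (fun=> r)) //; split; [exact: Rot_cst|exact: fsim_refl]. Qed.

Lemma FRle_st X Y : FRle X Y -> st X <= st Y.
Proof.
move=> [x [y [z [Xx [Yy [_ [z0 [d d0 xyz]]]]]]]].
have := xyz 0 (lexx 0) d0; rewrite (st_mem Xx) (st_mem Yy).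
by have := littleo_t_at0 z0; rewrite /= subr0 => ->; rewrite addr0.
Qed.

(* Both representatives are continuous at 0, so x < y on some [0, d). *)
Lemma st_lt_FRle X Y : st X < st Y -> FRle X Y.
Proof.
move=> XY; exists (FRrep X), (FRrep Y), (fun=> 0).
do 2 (split; first exact: FRrep_mem).
split; first exact: Rot_cst.
split; first exact: fsim_refl.
have m_gtX : st X < (st X + st Y) / 2 by lra.
have m_ltY : (st X + st Y) / 2 < st Y by lra.
have [d d0 dP] : exists2 d : R, 0 < d &
    forall t, 0 < t -> t < d -> FRrep X t < FRrep Y t.
  apply: near_right0_exists; near=> t; apply: (lt_trans (y := (st X + st Y) / 2)).
  - by near: t; apply: cvgr_lt m_gtX; exact/Rot_cvg/(FRrep_spec X).1.
  - by near: t; apply: cvgr_gt m_ltY; exact/Rot_cvg/(FRrep_spec Y).1.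
exists d => // t; rewrite le_eqVlt addr0 => /orP[/eqP<- _|t0 td].
  exact: ltW.
exact/ltW/dP.
Unshelve. all: by end_near. Qed.

Definition st_convex (A : set (FR R)) : Prop :=
  forall X Y Z, A X -> A Y -> st X < st Z -> st Z < st Y -> A Z.

Lemma eFRle_st_lt_trans (a : eFR R) X Z :
  eFRle a (Fin X) -> st X < st Z -> eFRlt a (Fin Z).
Proof.
case: a => [|A|] //= aX XZ; split => //.
  exact: st_lt_FRle (le_lt_trans (FRle_st aX) XZ).
by move=> [AZ]; move: aX XZ; rewrite AZ => /FRle_st; rewrite leNgt => /negP.
Qed.

Lemma st_lt_eFRle_trans (b : eFR R) X Z :
  st Z < st X -> eFRle (Fin X) b -> eFRlt (Fin Z) b.
Proof.
case: b => [|B|] //= ZX Xb; split => //.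
  exact: st_lt_FRle (lt_le_trans ZX (FRle_st Xb)).
by move=> [ZB]; move: Xb ZX; rewrite -ZB => /FRle_st; rewrite leNgt => /negP.
Qed.

Lemma FRitv_st_convex k (a b : eFR R) : st_convex (FRitv k a b).
Proof.
move=> X Y Z; rewrite /FRitv /=; case: k.
- move=> [aX _] [_ Yb] XZ ZY.
  by split; [exact: (eFRle_st_lt_trans aX XZ).1|exact: (st_lt_eFRle_trans ZY Yb).1].
- move=> [[aX _] _] [_ [Yb _]] XZ ZY.
  by split; [exact: eFRle_st_lt_trans aX XZ|exact: st_lt_eFRle_trans ZY Yb].
- move=> [aX _] [_ [Yb _]] XZ ZY.
  by split; [exact: (eFRle_st_lt_trans aX XZ).1|exact: st_lt_eFRle_trans ZY Yb].
- move=> [[aX _] _] [_ Yb] XZ ZY.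
  by split; [exact: eFRle_st_lt_trans aX XZ|exact: (st_lt_eFRle_trans ZY Yb).1].
Qed.

(* Z has the open neighbourhood st^-1 ]st X, st Y[, which lies in A. *)
Lemma st_convex_interior (A : set (FRtop R)) : st_convex A -> st_convex (interior A).
Proof.
move=> A_conv X Y Z AX AY XZ ZY.
pose V := [set r : R | st X < r] `&` [set r : R | r < st Y].
have oU : open ((@st R : FRtop R -> R) @^-1` V).
  by exists V => //; apply: openI; [exact: open_gt|exact: open_lt].
apply: (@filterS _ _ _ ((@st R : FRtop R -> R) @^-1` V)); last first.
  by apply: open_nbhs_nbhs; split.
by move=> W [XW WY]; exact: A_conv (interior_subset AX) (interior_subset AY) XW WY.
Qed.

Lemma st_convex_image_interval (A : set (FR R)) :
  st_convex A -> is_interval (@st R @` A).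
Proof.
move=> A_conv; apply/is_intervalPlt => _ _ [X AX <-] [Y AY <-] r /andP[Xr rY].
by exists (cstFR r); [apply: A_conv AX AY _ _; rewrite st_cst|exact: st_cst].
Qed.

Lemma st_convex_connected (A : set (FRtop R)) : st_convex A -> connected A.
Proof.
move=> A_conv; apply: connected_initial_image.
exact/connected_intervalP/st_convex_image_interval.
Qed.

End Fermat_reals.

Theorem lemma6 (R : realType) (J : set (FRtop R)) :
  is_FRinterval J -> connected J /\ connected (interior J).
Proof.
move=> [k [a [b [_ ->]]]].
have J_conv : st_convex (FRitv k a b) by exact: FRitv_st_convex.
by split; apply: st_convex_connected => //; exact: st_convex_interior.
Qed.
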